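(* Let $X$ be a special (abstract) rank one group with abelian unipotent subgroups $A$ and $B$. For $1 \neq a \in A$ put $n(a) := a\, b(a)^{-1} a$. Then for all $1 \neq a_1, a_2 \in A$, $$B^{a_1 a_2 n(a_2^{-1}) a_2} = B^{a_2 a_1 n(a_1^{-1}) a_1}.$$
   Context: For a group $X$ and $g \in X$, write $B^g = g^{-1}Bg$. A group $X$ is an (abstract) rank one group with abelian unipotent subgroups $A$ and $B$ if $X = \langle A, B\rangle$ where $A$ and $B$ are different abelian subgroups of $X$ such that for each $1 \neq a \in A$ there is an element $1 \neq b \in B$ with $A^b = B^a$, and for each $1 \neq b \in B$ there is an element $1 \neq a \in A$ with $B^a = A^b$. In such a group, for each $1 \neq a \in A$ the element $1 \neq b \in B$ with $A^b = B^a$ is uniquely determined and is denoted $b(a)$. The group $X$ is called special if $b(a^{-1}) = b(a)^{-1}$ for all $1 \neq a \in A$. *)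

Record Group := {
  carrier :> Type;
  mul : carrier -> carrier -> carrier;
  inv : carrier -> carrier;
  one : carrier;
  mulA : forall x y z, mul x (mul y z) = mul (mul x y) z;
  mul1g : forall x, mul one x = x;
  mulg1 : forall x, mul x one = x;
  mulVg : forall x, mul (inv x) x = one;
  mulgV : forall x, mul x (inv x) = one
}.

Arguments mul {g}.
Arguments inv {g}.
Arguments one {g}.

Section Defs.
Variable X : Group.

Definition set_eq (P Q : X -> Prop) : Prop := forall x, P x <-> Q x.

Definition is_subgroup (S : X -> Prop) : Prop :=
  S one /\ (forall x y, S x -> S y -> S (mul x y)) /\ (forall x, S x -> S (inv x)).

Definition is_abelian (S : X -> Prop) : Prop :=
  forall x y, S x -> S y -> mul x y = mul y x.

Inductive gen (S : X -> Prop) : X -> Prop :=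
| gen_in : forall x, S x -> gen S x
| gen_one : gen S one
| gen_mul : forall x y, gen S x -> gen S y -> gen S (mul x y)
| gen_inv : forall x, gen S x -> gen S (inv x).

(* S^g = g^{-1} S g *)
Definition conjset (S : X -> Prop) (g : X) : X -> Prop :=
  fun x => exists s, S s /\ x = mul (inv g) (mul s g).

Definition rank_one (A B : X -> Prop) : Prop :=
  is_subgroup A /\ is_subgroup B /\ is_abelian A /\ is_abelian B /\
  ~ set_eq A B /\
  (forall x : X, gen (fun y => A y \/ B y) x) /\
  (forall a, A a -> a <> one ->
     exists b, B b /\ b <> one /\ set_eq (conjset A b) (conjset B a)) /\
  (forall b, B b -> b <> one ->
     exists a, A a /\ a <> one /\ set_eq (conjset B a) (conjset A b)).

(* is_b A B a b  :<->  b = b(a), i.e. 1 <> b in B with A^b = B^a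
   (b(a) is uniquely determined by this property) *)
Definition is_b (A B : X -> Prop) (a b : X) : Prop :=
  B b /\ b <> one /\ set_eq (conjset A b) (conjset B a).

Definition special (A B : X -> Prop) : Prop :=
  forall a b, A a -> a <> one -> is_b A B a b -> is_b A B (inv a) (inv b).

End Defs.

Arguments set_eq {X}.
Arguments conjset {X}.
Arguments rank_one {X}.
Arguments is_b {X}.
Arguments special {X}.

From Stdlib Require Import Setoid Morphisms.

(* Write c_i = b(a_i^{-1}).  The element on each side collapses:
   a1 a2 n(a2^{-1}) a2 = a1 a2 (a2^{-1} c2^{-1} a2^{-1}) a2 = a1 c2^{-1}, and
   symmetrically the right-hand element is a2 c1^{-1}.  Since X is special,
   c_i^{-1} = b(a_i), i.e. A^{c_i^{-1}} = B^{a_i}.  Hence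
     B^{a1 c2^{-1}} = (B^{a1})^{c2^{-1}} = A^{c1^{-1} c2^{-1}},
     B^{a2 c1^{-1}} = (B^{a2})^{c1^{-1}} = A^{c2^{-1} c1^{-1}},
   and these agree because B is abelian. *)

Section GroupFacts.
Variable X : Group.

Lemma mulgK (x y : X) : mul (mul x y) (inv y) = x.
Proof. rewrite <- mulA, mulgV, mulg1. reflexivity. Qed.

Lemma mulgVK (x y : X) : mul (mul x (inv y)) y = x.
Proof. rewrite <- mulA, mulVg, mulg1. reflexivity. Qed.

Lemma inv_uniq (x y : X) : mul x y = one -> y = inv x.
Proof.
  intro H. rewrite <- (mul1g _ y), <- (mulVg _ x), <- mulA, H, mulg1. reflexivity.
Qed.

Lemma invK (x : X) : inv (inv x) = x.
Proof. symmetry. apply inv_uniq. apply mulVg. Qed.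

Lemma invM (g h : X) : inv (mul g h) = mul (inv h) (inv g).
Proof. symmetry. apply inv_uniq. rewrite !mulA, mulgK, mulgV. reflexivity. Qed.

Lemma inv_neq1 (x : X) : x <> one -> inv x <> one.
Proof.
  intros Hx E. apply Hx. rewrite <- (invK x), E.
  symmetry. apply inv_uniq. apply mulg1.
Qed.

(* The word x y n z y with n = y^{-1} z y^{-1} collapses to x z; this is the
   shape of a1 a2 n(a2^{-1}) a2 once n(a2^{-1}) is unfolded. *)
Lemma conj_word_collapse (x y z : X) :
  mul (mul (mul x y) (mul (inv y) (mul z (inv y)))) y = mul x z.
Proof. rewrite !mulA, mulgK, mulgVK. reflexivity. Qed.

End GroupFacts.

#[export] Instance set_eq_equiv (X : Group) : Equivalence (@set_eq X).
Proof.
  split.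
  - intros S x. reflexivity.
  - intros S T E x. symmetry. apply E.
  - intros S T U E F x. rewrite (E x). apply F.
Qed.

#[export] Instance conjset_proper (X : Group) :
  Proper (set_eq ==> eq ==> set_eq) (@conjset X).
Proof.
  intros S T E g _ <- x.
  split; intros [s [Hs ->]]; exists s; split; auto; apply E; exact Hs.
Qed.

Lemma conjsetM (X : Group) (S : X -> Prop) (g h : X) :
  set_eq (conjset S (mul g h)) (conjset (conjset S g) h).
Proof.
  intro x; split.
  - intros [s [Hs ->]]. exists (mul (inv g) (mul s g)). split.
    + exists s. auto.
    + rewrite invM, !mulA. reflexivity.
  - intros [y [[s [Hs ->]] ->]]. exists s. split; [exact Hs|].
    rewrite invM, !mulA. reflexivity.
Qed.

(* In a special group, if c = b(a^{-1}) then c^{-1} = b(a), so A^{c^{-1}} = B^a. *)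
Lemma special_conj_inv (X : Group) (A B : X -> Prop) (a c : X) :
  is_subgroup X A -> special A B -> A a -> a <> one ->
  is_b A B (inv a) c -> set_eq (conjset A (inv c)) (conjset B a).
Proof.
  intros [_ [_ HAinv]] Hsp Ha Ha1 Hc.
  destruct (Hsp _ _ (HAinv _ Ha) (inv_neq1 _ _ Ha1) Hc) as [_ [_ E]].
  rewrite invK in E. exact E.
Qed.

Theorem lemma2p1 (X : Group) (A B : X -> Prop) :
  rank_one A B -> special A B ->
  forall a1 a2 c1 c2 : X,
    A a1 -> a1 <> one -> A a2 -> a2 <> one ->
    is_b A B (inv a1) c1 -> is_b A B (inv a2) c2 ->
    set_eq
      (conjset B (mul (mul (mul a1 a2) (mul (inv a2) (mul (inv c2) (inv a2)))) a2))
      (conjset B (mul (mul (mul a2 a1) (mul (inv a1) (mul (inv c1) (inv a1)))) a1)).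
Proof.
  intros [HA [[_ [_ HBinv]] [_ [HBab _]]]] Hsp a1 a2 c1 c2 HA1 Hn1 HA2 Hn2 Hb1 Hb2.
  pose proof (special_conj_inv _ _ _ _ _ HA Hsp HA1 Hn1 Hb1) as E1.
  pose proof (special_conj_inv _ _ _ _ _ HA Hsp HA2 Hn2 Hb2) as E2.
  assert (Hcomm : mul (inv c1) (inv c2) = mul (inv c2) (inv c1)).
  { destruct Hb1 as [Bc1 _], Hb2 as [Bc2 _]. apply HBab; apply HBinv; assumption. }
  rewrite !conj_word_collapse, !conjsetM, <- E1, <- E2, <- !conjsetM, Hcomm.
  reflexivity.
Qed.
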